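(* Every consistent normal modal logic $\Lambda$ is of exactly one of the following types: Type A: $F_\circ\models\Lambda$; Type B: $F_\bullet\models\Lambda$ and $\Lambda\vdash\Box^n\bot$ for some $n\ge 1$; Type C: $F_\bullet\models\Lambda$, $\Lambda\not\vdash\Box^n\bot$ for all $n\ge1$, and $\Lambda\vdash\Diamond^{\le n}\Box\bot$ for some $n\ge 1$.
   Context: A normal modal logic is a set of modal formulas containing all propositional tautologies, the axiom $\Box(\phi\to\psi)\to(\Box\phi\to\Box\psi)$ and $\Diamond\phi\leftrightarrow\neg\Box\neg\phi$, and closed under modus ponens, uniform substitution and necessitation; $\Lambda\vdash\phi$ means $\phi\in\Lambda$; $\Lambda$ is consistent if $\bot\notin\Lambda$. $F_\circ$ is the Kripke frame consisting of a single reflexive world; $F_\bullet$ is the Kripke frame consisting of a single irreflexive world; $F\models\Lambda$ means every formula of $\Lambda$ is valid on $F$. $\Box^0\phi=\phi$, $\Box^{k+1}\phi=\Box\Box^k\phi$, similarly for $\Diamond^k$, and $\Diamond^{\le n}\phi=\bigvee_{k\le n}\Diamond^k\phi$. *)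

Inductive form : Type :=
| Var : nat -> form
| Bot : form
| Imp : form -> form -> form
| Box : form -> form
| Dia : form -> form.

Definition Neg (a : form) : form := Imp a Bot.
Definition Top : form := Neg Bot.
Definition Or (a b : form) : form := Imp (Neg a) b.
Definition And (a b : form) : form := Neg (Imp a (Neg b)).
Definition Iff (a b : form) : form := And (Imp a b) (Imp b a).

Fixpoint peval (v : form -> bool) (a : form) : bool :=
  match a with
  | Var n => v (Var n)
  | Bot => false
  | Imp a b => implb (peval v a) (peval v b)
  | Box a => v (Box a)
  | Dia a => v (Dia a)
  end.

(* propositional tautology (substitution instance of a classical tautology) *)
Definition tautology (a : form) : Prop := forall v : form -> bool, peval v a = true.

Fixpoint subst (s : nat -> form) (a : form) : form :=
  match a with
  | Var n => s n
  | Bot => Bot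
  | Imp a b => Imp (subst s a) (subst s b)
  | Box a => Box (subst s a)
  | Dia a => Dia (subst s a)
  end.

(* A logic is a set of formulas; L a means "L |- a", i.e. a ∈ L. *)
Definition logic := form -> Prop.

Record normal (L : logic) : Prop := {
  n_taut : forall a, tautology a -> L a;
  n_K : forall a b, L (Imp (Box (Imp a b)) (Imp (Box a) (Box b)));
  n_dual : forall a, L (Iff (Dia a) (Neg (Box (Neg a))));
  n_mp : forall a b, L (Imp a b) -> L a -> L b;
  n_subst : forall s a, L a -> L (subst s a);
  n_nec : forall a, L a -> L (Box a)
}.

Definition consistent (L : logic) : Prop := ~ L Bot.

Record frame : Type := { world : Type; rel : world -> world -> Prop }.

Fixpoint sat (F : frame) (V : nat -> world F -> Prop) (w : world F) (a : form) : Prop :=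
  match a with
  | Var n => V n w
  | Bot => False
  | Imp a b => sat F V w a -> sat F V w b
  | Box a => forall u, rel F w u -> sat F V u a
  | Dia a => exists u, rel F w u /\ sat F V u a
  end.

Definition valid_on (F : frame) (a : form) : Prop :=
  forall (V : nat -> world F -> Prop) (w : world F), sat F V w a.

Definition frame_validates (F : frame) (L : logic) : Prop :=
  forall a, L a -> valid_on F a.

Definition F_circ : frame := {| world := unit; rel := fun _ _ => True |}.
Definition F_bullet : frame := {| world := unit; rel := fun _ _ => False |}.

Fixpoint boxn (k : nat) (a : form) : form :=
  match k with O => a | S k => Box (boxn k a) end.
Fixpoint dian (k : nat) (a : form) : form :=
  match k with O => a | S k => Dia (dian k a) end.

Fixpoint dia_le (n : nat) (a : form) : form :=
  match n with
  | O => dian 0 a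
  | S m => Or (dia_le m a) (dian (S m) a)
  end.

Definition typeA (L : logic) : Prop := frame_validates F_circ L.
Definition typeB (L : logic) : Prop :=
  frame_validates F_bullet L /\ exists n, 1 <= n /\ L (boxn n Bot).
Definition typeC (L : logic) : Prop :=
  frame_validates F_bullet L /\ (forall n, 1 <= n -> ~ L (boxn n Bot)) /\
  exists n, 1 <= n /\ L (dia_le n (Box Bot)).

(* Makinson's theorem plus a depth argument.  A closed (variable-free) theorem of
   a normal logic L has a fixed truth value on each one-world frame, and L itself
   proves that value under a hypothesis describing the world: [Box Bot] for the
   irreflexive point, and "no dead end within d steps", the negation of
   [dia_le d (Box Bot)], for the reflexive point once d bounds the modal depth.
   Substituting [Top]/[Bot] for variables turns any countermodel on a point into
   a closed theorem that is false there.  Hence if the reflexive point refutes L,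
   then L proves [dia_le d (Box Bot)]; if moreover L proved [Neg (Box Bot)] it
   would also prove "no dead end within d steps" and be inconsistent, so L does
   not prove [Neg (Box Bot)] and therefore the irreflexive point validates L.
   The types exclude each other because the reflexive point refutes every
   [boxn n Bot] and every [dia_le n (Box Bot)]. *)

From Stdlib Require Import Classical ClassicalEpsilon Bool Lia.

Definition no_dead_end_within (d : nat) : form := Neg (dia_le d (Box Bot)).

Ltac solve_taut :=
  let v := fresh "v" in
  intro v; cbv [no_dead_end_within dia_le dian Neg Top Or And Iff]; simpl;
  repeat match goal with
         | |- context [peval v ?x] => destruct (peval v x)
         | |- context [v ?x] => destruct (v x)
         end; reflexivity.

Lemma peval_dia_le_base v d a : peval v a = true -> peval v (dia_le d a) = true.
Proof.
  intros Ha; induction d as [|d IH]; simpl; [exact Ha|].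
  rewrite IH; destruct (peval v (dian d a)); reflexivity.
Qed.

Section NormalLogic.

Variable L : logic.
Hypothesis HL : normal L.

Lemma mp_taut p q : L p -> tautology (Imp p q) -> L q.
Proof. intros Hp T. exact (n_mp L HL _ _ (n_taut L HL _ T) Hp). Qed.

Lemma mp2_taut p1 p2 q : L p1 -> L p2 -> tautology (Imp p1 (Imp p2 q)) -> L q.
Proof. intros H1 H2 T. exact (n_mp L HL _ _ (mp_taut _ _ H1 T) H2). Qed.

Lemma mp3_taut p1 p2 p3 q :
  L p1 -> L p2 -> L p3 -> tautology (Imp p1 (Imp p2 (Imp p3 q))) -> L q.
Proof. intros H1 H2 H3 T. exact (n_mp L HL _ _ (mp2_taut _ _ _ H1 H2 T) H3). Qed.

Lemma imp_trans a b c : L (Imp a b) -> L (Imp b c) -> L (Imp a c).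
Proof. intros Hab Hbc. apply (mp2_taut _ _ _ Hab Hbc). solve_taut. Qed.

Lemma box_mono a b : L (Imp a b) -> L (Imp (Box a) (Box b)).
Proof. intros Hab. exact (n_mp L HL _ _ (n_K L HL a b) (n_nec L HL _ Hab)). Qed.

Lemma dia_not_box_not a : L (Imp (Dia a) (Neg (Box (Neg a)))).
Proof. apply (mp_taut _ _ (n_dual L HL a)). solve_taut. Qed.

Lemma not_dia_box_not a : L (Imp (Neg (Dia a)) (Box (Neg a))).
Proof. apply (mp_taut _ _ (n_dual L HL a)). solve_taut. Qed.

Lemma box_and_intro h a b :
  L (Imp h (Box a)) -> L (Imp h (Box b)) -> L (Imp h (Box (And a b))).
Proof.
  intros Ha Hb.
  assert (Hpair : L (Imp (Box a) (Box (Imp b (And a b)))))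
    by (apply box_mono, (n_taut L HL); solve_taut).
  apply (mp3_taut _ _ _ _ Ha Hb (imp_trans _ _ _ Hpair (n_K L HL b (And a b)))).
  solve_taut.
Qed.

Definition decides (h a : form) (t : bool) : Prop :=
  L (Imp h (if t then a else Neg a)).

Lemma decides_bot h : decides h Bot false.
Proof. apply (n_taut L HL). solve_taut. Qed.

Lemma decides_imp h a b s t :
  decides h a s -> decides h b t -> decides h (Imp a b) (implb s t).
Proof.
  unfold decides; intros Ha Hb.
  destruct s, t; simpl in *; apply (mp2_taut _ _ _ Ha Hb); solve_taut.
Qed.

Lemma decides_neg h a t : decides h a t -> decides h (Neg a) (negb t).
Proof.
  intros Ha. replace (negb t) with (implb t false) by (destruct t; reflexivity).
  exact (decides_imp _ _ _ _ _ Ha (decides_bot h)).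
Qed.

Lemma decides_dia h a t : decides h (Box (Neg a)) (negb t) -> decides h (Dia a) t.
Proof.
  unfold decides; intros Hbox. destruct t; simpl in Hbox.
  - apply (mp2_taut _ _ _ Hbox (not_dia_box_not a)). solve_taut.
  - apply (mp2_taut _ _ _ Hbox (dia_not_box_not a)). solve_taut.
Qed.

Lemma decides_false_refutes h b : L b -> decides h b false -> L (Neg h).
Proof. intros Hb Hhb. apply (mp2_taut _ _ _ Hb Hhb). solve_taut. Qed.

Lemma no_dead_end_within_not_box_bot d :
  L (Imp (no_dead_end_within d) (Neg (Box Bot))).
Proof.
  apply (n_taut L HL). intro v; unfold no_dead_end_within, Neg; simpl.
  destruct (v (Box Bot)) eqn:E.
  - rewrite peval_dia_le_base by exact E. reflexivity.
  - destruct (peval v (dia_le d (Box Bot))); reflexivity.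
Qed.

Lemma no_dead_end_within_S d :
  L (Imp (no_dead_end_within (S d)) (Box (no_dead_end_within d))).
Proof.
  induction d as [|d IH].
  - apply (mp_taut _ _ (not_dia_box_not (Box Bot))). solve_taut.
  - assert (Hd : L (Imp (no_dead_end_within (S (S d))) (Box (no_dead_end_within d)))).
    { apply (imp_trans _ (no_dead_end_within (S d))); [|exact IH].
      apply (n_taut L HL). solve_taut. }
    assert (Hstep : L (Imp (no_dead_end_within (S (S d)))
                           (Box (Neg (dian (S d) (Box Bot)))))).
    { apply (mp_taut _ _ (not_dia_box_not (dian (S d) (Box Bot)))). solve_taut. }
    apply (imp_trans _ _ _ (box_and_intro _ _ _ Hd Hstep)).
    apply box_mono, (n_taut L HL). solve_taut.
Qed.

(* For [t = false], K turns [Box (Neg b)] and [Box b] into [Box Bot], which the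
   hypothesis refutes. *)
Lemma decides_box_no_dead_end d b t :
  decides (no_dead_end_within d) b t ->
  decides (no_dead_end_within (S d)) (Box b) t.
Proof.
  unfold decides; intros Hb.
  assert (Hbox := imp_trans _ _ _ (no_dead_end_within_S d) (box_mono _ _ Hb)).
  destruct t; [exact Hbox|].
  apply (mp3_taut _ _ _ _ Hbox (n_K L HL b Bot) (no_dead_end_within_not_box_bot (S d))).
  solve_taut.
Qed.

Fixpoint closed (a : form) : Prop :=
  match a with
  | Var _ => False
  | Bot => True
  | Imp a b => closed a /\ closed b
  | Box a | Dia a => closed a
  end.

(* Truth value of a closed formula at the unique world of the one-world frame
   that is reflexive iff [r]. *)
Fixpoint eval (r : bool) (a : form) : bool :=
  match a with
  | Var _ | Bot => false
  | Imp a b => implb (eval r a) (eval r b)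
  | Box a => implb r (eval r a)
  | Dia a => r && eval r a
  end.

Fixpoint depth (a : form) : nat :=
  match a with
  | Var _ | Bot => 0
  | Imp a b => Nat.max (depth a) (depth b)
  | Box a | Dia a => S (depth a)
  end.

Lemma closed_decides_reflexive b d :
  closed b -> depth b <= d -> decides (no_dead_end_within d) b (eval true b).
Proof.
  revert d; induction b as [n| |b1 IH1 b2 IH2|b IH|b IH]; simpl; intros d Hc Hd.
  - contradiction.
  - apply decides_bot.
  - destruct Hc as [C1 C2].
    apply decides_imp; [apply IH1|apply IH2]; auto; lia.
  - destruct d as [|d]; [lia|].
    apply decides_box_no_dead_end, IH; [exact Hc|lia].
  - destruct d as [|d]; [lia|].
    apply decides_dia, decides_box_no_dead_end, decides_neg, IH; [exact Hc|lia].
Qed.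

Lemma closed_decides_irreflexive b :
  closed b -> decides (Box Bot) b (eval false b).
Proof.
  induction b as [n| |b1 IH1 b2 IH2|b IH|b IH]; simpl; intros Hc.
  - contradiction.
  - apply decides_bot.
  - apply decides_imp; [apply IH1|apply IH2]; tauto.
  - apply box_mono, (n_taut L HL). solve_taut.
  - apply decides_dia, box_mono, (n_taut L HL). solve_taut.
Qed.

End NormalLogic.

Lemma sat_subst F V s a w :
  sat F V w (subst s a) <-> sat F (fun n u => sat F V u (s n)) w a.
Proof.
  revert w; induction a as [n| |a1 IH1 a2 IH2|a IH|a IH]; simpl; intros w.
  - reflexivity.
  - reflexivity.
  - rewrite IH1, IH2. reflexivity.
  - split; intros Ha u Hu; apply IH; auto.
  - split; intros [u [Hu Ha]]; exists u; split; auto; apply IH; auto.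
Qed.

Lemma sat_ext F V1 V2 :
  (forall n u, V1 n u <-> V2 n u) -> forall a w, sat F V1 w a <-> sat F V2 w a.
Proof.
  intros HV a; induction a as [n| |a1 IH1 a2 IH2|a IH|a IH]; simpl; intros w.
  - apply HV.
  - reflexivity.
  - rewrite IH1, IH2. reflexivity.
  - split; intros Ha u Hu; apply IH; auto.
  - split; intros [u [Hu Ha]]; exists u; split; auto; apply IH; auto.
Qed.

Section OneWorldFrame.

Variables (F : frame) (w0 : world F) (r : bool).
Hypothesis only_w0 : forall u : world F, u = w0.
Hypothesis rel_w0 : rel F w0 w0 <-> r = true.

Lemma sat_closed_one_world V b : closed b -> (sat F V w0 b <-> eval r b = true).
Proof.
  induction b as [n| |b1 IH1 b2 IH2|b IH|b IH]; simpl; intros Hc.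
  - contradiction.
  - split; [tauto|discriminate].
  - destruct Hc as [C1 C2]. rewrite (IH1 C1), (IH2 C2).
    destruct (eval r b1), (eval r b2); simpl; intuition discriminate.
  - destruct r; simpl.
    + rewrite <- (IH Hc). split.
      * intros Hb. apply Hb, rel_w0. reflexivity.
      * intros Hb u _. rewrite (only_w0 u). exact Hb.
    + split; [reflexivity|]. intros _ u Hu.
      rewrite (only_w0 u), rel_w0 in Hu. discriminate.
  - destruct r; simpl.
    + rewrite <- (IH Hc). split.
      * intros [u [_ Hb]]. rewrite (only_w0 u) in Hb. exact Hb.
      * intros Hb. exists w0. split; [apply rel_w0; reflexivity|exact Hb].
    + split; [|discriminate]. intros [u [Hu _]].
      rewrite (only_w0 u), rel_w0 in Hu. discriminate.
Qed.

(* Replacing each variable by [Top] or [Bot], according to its value at [w0],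
   yields a closed instance with the same truth value. *)
Lemma refuted_closed_instance a :
  ~ valid_on F a -> exists s, closed (subst s a) /\ eval r (subst s a) = false.
Proof.
  intros Hv. apply not_all_ex_not in Hv as [V Hv]. apply not_all_ex_not in Hv as [w Hv].
  rewrite (only_w0 w) in Hv.
  set (s n := if excluded_middle_informative (V n w0) then Top else Bot).
  assert (Hs : forall n, closed (s n)).
  { intros n. unfold s. destruct excluded_middle_informative; simpl; tauto. }
  assert (Hclosed : closed (subst s a)).
  { clear Hv; induction a; simpl; auto. }
  exists s; split; [exact Hclosed|].
  apply not_true_is_false. rewrite <- (sat_closed_one_world V _ Hclosed), sat_subst.
  rewrite (sat_ext F _ V); [exact Hv|].
  intros n u. rewrite (only_w0 u). unfold s.
  destruct excluded_middle_informative; simpl; tauto.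
Qed.

End OneWorldFrame.

Lemma unit_eq_tt (u : unit) : u = tt.
Proof. destruct u; reflexivity. Qed.

Lemma theorem_refuted_on_circ L a :
  normal L -> L a -> ~ valid_on F_circ a -> exists d, L (dia_le d (Box Bot)).
Proof.
  intros HL La Hv.
  destruct (refuted_closed_instance F_circ tt true unit_eq_tt
              ltac:(simpl; tauto) a Hv) as [s [Hc Hf]].
  set (b := subst s a) in *.
  assert (Hdec := closed_decides_reflexive L HL b (depth b) Hc (le_n _)).
  rewrite Hf in Hdec.
  exists (depth b).
  apply (mp_taut L HL _ _ (decides_false_refutes L HL _ _ (n_subst L HL s a La) Hdec)).
  solve_taut.
Qed.

Lemma theorem_refuted_on_bullet L a :
  normal L -> L a -> ~ valid_on F_bullet a -> L (Neg (Box Bot)).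
Proof.
  intros HL La Hv.
  destruct (refuted_closed_instance F_bullet tt false unit_eq_tt
              ltac:(simpl; intuition discriminate) a Hv) as [s [Hc Hf]].
  assert (Hdec := closed_decides_irreflexive L HL _ Hc).
  rewrite Hf in Hdec.
  exact (decides_false_refutes L HL _ _ (n_subst L HL s a La) Hdec).
Qed.

Lemma no_dead_end_within_all L :
  normal L -> L (Neg (Box Bot)) -> forall d, L (no_dead_end_within d).
Proof.
  intros HL Hnb.
  assert (Hdian : forall k, L (Neg (dian k (Box Bot)))).
  { induction k as [|k IH]; [exact Hnb|].
    apply (mp2_taut L HL _ _ _ (n_nec L HL _ IH) (dia_not_box_not L HL (dian k (Box Bot)))).
    solve_taut. }
  induction d as [|d IH]; [exact Hnb|].
  apply (mp2_taut L HL _ _ _ IH (Hdian (S d))). solve_taut.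
Qed.

Theorem makinson L :
  normal L -> consistent L -> typeA L \/ frame_validates F_bullet L.
Proof.
  intros HL Hcons.
  destruct (classic (L (Neg (Box Bot)))) as [Hnb|Hnb]; [left|right];
    intros a La; apply NNPP; intros Hv.
  - destruct (theorem_refuted_on_circ L a HL La Hv) as [d Hd].
    apply Hcons, (mp2_taut L HL _ _ _ (no_dead_end_within_all L HL Hnb d) Hd).
    solve_taut.
  - exact (Hnb (theorem_refuted_on_bullet L a HL La Hv)).
Qed.

Lemma not_typeA_dia_le L :
  normal L -> ~ typeA L -> exists n, 1 <= n /\ L (dia_le n (Box Bot)).
Proof.
  intros HL HnA. apply not_all_ex_not in HnA as [a HnA].
  apply imply_to_and in HnA as [La Hv].
  destruct (theorem_refuted_on_circ L a HL La Hv) as [d Hd].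
  exists (S d); split; [lia|]. apply (mp_taut L HL _ _ Hd). solve_taut.
Qed.

Lemma circ_not_boxn V n : ~ sat F_circ V tt (boxn n Bot).
Proof. induction n as [|n IH]; simpl; [tauto|]. intros Hn. exact (IH (Hn tt I)). Qed.

Lemma circ_not_dian V k : ~ sat F_circ V tt (dian k (Box Bot)).
Proof.
  induction k as [|k IH]; simpl.
  - intros Hb. exact (Hb tt I).
  - intros [[] [_ Hk]]. exact (IH Hk).
Qed.

Lemma circ_not_dia_le V n : ~ sat F_circ V tt (dia_le n (Box Bot)).
Proof.
  induction n as [|n IH]; simpl.
  - exact (circ_not_dian V 0).
  - intros Hn. exact (circ_not_dian V (S n) (Hn IH)).
Qed.

Lemma typeA_not_typeB L : typeA L -> ~ typeB L.
Proof.
  intros HA [_ [n [_ Ln]]]. exact (circ_not_boxn (fun _ _ => False) n (HA _ Ln _ tt)).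
Qed.

Lemma typeA_not_typeC L : typeA L -> ~ typeC L.
Proof.
  intros HA [_ [_ [n [_ Ln]]]].
  exact (circ_not_dia_le (fun _ _ => False) n (HA _ Ln _ tt)).
Qed.

Lemma typeB_not_typeC L : typeB L -> ~ typeC L.
Proof. intros [_ [n [Hn Ln]]] [_ [HnB _]]. exact (HnB n Hn Ln). Qed.

Theorem theorem4p13 (L : logic) :
  normal L -> consistent L ->
  (typeA L /\ ~ typeB L /\ ~ typeC L) \/
  (~ typeA L /\ typeB L /\ ~ typeC L) \/
  (~ typeA L /\ ~ typeB L /\ typeC L).
Proof.
  intros HL Hcons.
  destruct (classic (typeA L)) as [HA|HnA].
  - left. auto using typeA_not_typeB, typeA_not_typeC.
  - right.
    assert (Hbullet : frame_validates F_bullet L)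
      by (destruct (makinson L HL Hcons); tauto).
    assert (Hdia := not_typeA_dia_le L HL HnA).
    destruct (classic (exists n, 1 <= n /\ L (boxn n Bot))) as [HB|HnB].
    + left. assert (typeB L) by (split; assumption). auto using typeB_not_typeC.
    + right. split; [exact HnA|split].
      * intros [_ HB]. exact (HnB HB).
      * split; [exact Hbullet|split; [|exact Hdia]].
        intros n Hn Ln. apply HnB. eauto.
Qed.
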